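(* Let $\Gamma=(\mathcal{V},\mathcal{H})$ be an oriented hypergraph. Up to changing the orientation of some hyperedges, $\Gamma$ is bipartite if and only if $\Gamma$ is vertex-bipartite.
   Context: An oriented hypergraph is a pair $\Gamma=(\mathcal{V},\mathcal{H})$ where $\mathcal{V}$ is a finite set of vertices and each hyperedge $h\in\mathcal{H}$ is a pair $(h_{in},h_{out})$ of disjoint nonempty subsets of $\mathcal{V}$ (inputs and outputs); standing assumption: no isolated vertices. Changing the orientation of $h$ replaces $(h_{in},h_{out})$ by $(h_{out},h_{in})$. $\Gamma$ is bipartite if $\mathcal{V}=\mathcal{V}_1\sqcup\mathcal{V}_2$ such that every hyperedge either has all its inputs in $\mathcal{V}_1$ and all its outputs in $\mathcal{V}_2$, or vice versa. $\Gamma$ is vertex-bipartite if $\mathcal{H}=\mathcal{H}_1\sqcup\mathcal{H}_2$ such that for every vertex $v$, either $v$ is an input only for hyperedges in $\mathcal{H}_1$ and an output only for hyperedges in $\mathcal{H}_2$, or $v$ is an input only for hyperedges in $\mathcal{H}_2$ and an output only for hyperedges in $\mathcal{H}_1$. *)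

From mathcomp Require Import all_boot.
Set Implicit Arguments. Unset Strict Implicit. Unset Printing Implicit Defensive.

Definition oriented_hypergraph (V H : finType) (hin hout : H -> {set V}) : Prop :=
  (forall h, [disjoint hin h & hout h]) /\
  (forall h, hin h != set0) /\
  (forall h, hout h != set0) /\
  (* standing assumption: no isolated vertices *)
  (forall v : V, exists h : H, (v \in hin h) || (v \in hout h)).

Definition reorient_in (V H : finType) (S : {set H}) (hin hout : H -> {set V}) :=
  fun h => if h \in S then hout h else hin h.
Definition reorient_out (V H : finType) (S : {set H}) (hin hout : H -> {set V}) :=
  fun h => if h \in S then hin h else hout h.

Definition bipartite (V H : finType) (hin hout : H -> {set V}) : Prop :=
  exists V1 V2 : {set V},
    [disjoint V1 & V2] /\ V1 :|: V2 = setT /\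
    forall h, (hin h \subset V1 /\ hout h \subset V2) \/
              (hin h \subset V2 /\ hout h \subset V1).

Definition vertex_bipartite (V H : finType) (hin hout : H -> {set V}) : Prop :=
  exists H1 H2 : {set H},
    [disjoint H1 & H2] /\ H1 :|: H2 = setT /\
    forall v : V,
      ((forall h, v \in hin h -> h \in H1) /\ (forall h, v \in hout h -> h \in H2)) \/
      ((forall h, v \in hin h -> h \in H2) /\ (forall h, v \in hout h -> h \in H1)).

(* Both notions mean that vertices and hyperedges can be signed so that every
   input of a hyperedge carries the sign of the hyperedge and every output the
   opposite sign.  Vertex-bipartiteness is bipartiteness of the dual
   hypergraph, and this signing condition is self-dual.  Since bipartiteness
   lets each hyperedge point either way, reorienting hyperedges preserves it. *)

From mathcomp Require Import all_boot.

Set Implicit Arguments.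
Unset Strict Implicit.
Unset Printing Implicit Defensive.

Lemma setC_of_partition (T : finType) (A B : {set T}) :
  [disjoint A & B] -> A :|: B = setT -> B = ~: A.
Proof.
move=> dAB cover; apply/setP => x; rewrite inE.
have := in_setT x; rewrite -cover inE.
by case: (boolP (x \in A)) => [xA | _ //]; rewrite (disjointFr dAB xA).
Qed.

Definition dual_incidence (V H : finType) (e : H -> {set V}) : V -> {set H} :=
  fun v => [set h | v \in e h].

Section Signings.

Variables (V H : finType) (hin hout : H -> {set V}).

Definition consistent_signs (c : V -> bool) (b : H -> bool) : Prop :=
  forall v h, (v \in hin h -> c v = b h) /\ (v \in hout h -> c v != b h).

Definition signable : Prop := exists c b, consistent_signs c b.

Lemma separated_by_sign (A : {set V}) (h : H) :
  (hin h \subset A /\ hout h \subset ~: A) \/ (hin h \subset ~: A /\ hout h \subset A)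
  <-> exists s : bool, forall v,
        (v \in hin h -> (v \in A) = s) /\ (v \in hout h -> (v \in A) != s).
Proof.
split=> [[[/subsetP inA /subsetP outA] | [/subsetP inA /subsetP outA]] | [s sepA]].
- by exists true => v; split=> [/inA -> // | /outA]; rewrite inE => /negPf ->.
- by exists false => v; split=> [/inA | /outA -> //]; rewrite inE => /negPf ->.
- case: s sepA => sepA; [left | right]; split; apply/subsetP => v; rewrite ?inE;
    case: (sepA v) => inA outA; [move/inA | move/outA | move/inA | move/outA];
    by case: (v \in A).
Qed.

Lemma bipartite_signable : bipartite hin hout <-> signable.
Proof.
split=> [[V1 [V2 [dV [coverV sepV]]]] | [c [b cb]]].
- rewrite (setC_of_partition dV coverV) in sepV.
  have [b Hb] := fin_all_exists (fun h => proj1 (separated_by_sign V1 h) (sepV h)).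
  by exists (fun v => v \in V1), b => v h; apply: Hb.
- exists [set v | c v], (~: [set v | c v]).
  split; first by rewrite disjoints_subset setCK.
  split=> [|h]; first exact: setUCr.
  by apply/separated_by_sign; exists (b h) => v; rewrite inE; apply: cb.
Qed.

Lemma bipartite_reorient (S : {set H}) :
  bipartite (reorient_in S hin hout) (reorient_out S hin hout) <-> bipartite hin hout.
Proof.
rewrite /bipartite /reorient_in /reorient_out.
split=> -[V1 [V2 [dV [coverV sepV]]]]; exists V1, V2; do 2!split=> //;
  by move=> h; have := sepV h; case: (h \in S); tauto.
Qed.

Lemma vertex_bipartite_dual :
  vertex_bipartite hin hout <->
  bipartite (dual_incidence hin) (dual_incidence hout).
Proof.
have incident_subset (e : H -> {set V}) v (A : {set H}) :
    (forall h, v \in e h -> h \in A) <-> dual_incidence e v \subset A.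
  by split=> [sub | /subsetP sub h ev]; [apply/subsetP => h; rewrite inE; apply: sub
                                        | apply: sub; rewrite inE].
split=> -[H1 [H2 [dH [coverH sepH]]]]; exists H1, H2; do 2!split=> //;
  by move=> v; case: (sepH v) => -[in1 out1]; [left | right]; split; apply/incident_subset.
Qed.

End Signings.

Lemma signable_dual (V H : finType) (hin hout : H -> {set V}) :
  signable (dual_incidence hin) (dual_incidence hout) <-> signable hin hout.
Proof.
split=> -[c [b cb]]; exists b, c => x y; case: (cb y x); rewrite ?inE => inxy outxy;
  by split=> [/inxy -> | /outxy]; rewrite // eq_sym.
Qed.

Theorem mainTheorem2 (V H : finType) (hin hout : H -> {set V}) :
  oriented_hypergraph hin hout ->
  ((exists S : {set H}, bipartite (reorient_in S hin hout) (reorient_out S hin hout))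
   <-> vertex_bipartite hin hout).
Proof.
move=> _; split=> [[S /bipartite_reorient /bipartite_signable sign] |
                   /vertex_bipartite_dual/bipartite_signable/signable_dual sign].
- exact/vertex_bipartite_dual/bipartite_signable/signable_dual.
- by exists set0; apply/bipartite_reorient/bipartite_signable.
Qed.
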